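(* Let $\Gamma:\mathbf{FinArb}^<_\star\to\mathbf{TArb}$ and $\mathrm{L}:\mathbf{TArb}\to\mathbf{FinArb}^<_\star$ be the functors defined below. Then $\Gamma$ is left adjoint to $\mathrm{L}$, i.e. $\Gamma\dashv\mathrm{L}$.
   Context: A (directed) graph is $(V,\to)$ with $\to\subseteq V\times V$; $N(u)$ is the set of outgoing edges of $u$. A pointed graph has a distinguished vertex $v_0$; connected means every vertex is reachable from $v_0$. A path is a finite sequence $v_1\to\cdots\to v_n$ of vertices joined by edges, with length $|\pi|$; co-initial paths share their source; $\pi\sqsubset\sigma$ means $\pi$ is a proper prefix of $\sigma$. A finite edge-ordered graph is a finite graph with a strict linear order $\triangleleft$ on each neighborhood. Lexicographic path order on co-initial paths: if $\pi\sqsubset\sigma$ then $\pi\prec\sigma$ (symmetrically); otherwise, with $\zeta$ the longest common prefix, $u$ its target and $v_1,v_2$ the next vertices, $\pi\prec\sigma$ iff $u\to v_1\triangleleft u\to v_2$. Shortlex: $\pi\prec^s\sigma$ iff $|\pi|<|\sigma|$ or ($|\pi|=|\sigma|$ and $\pi\prec\sigma$). A homomorphism of finite pointed edge-ordered graphs $h:G\to H$ is a vertex map with (i) $u\to v$ implies $h(u)\to h(v)$; (ii) the distinguished vertex of $G$ is the unique vertex mapped to the distinguished vertex of $H$; (iii) $u\to v_1\triangleleft u\to v_2$ implies $h(u)\to h(v_1)\triangleleft h(u)\to h(v_2)$. An arborescence is a pointed graph with a unique path $v_0\rightsquigarrow u$ for each vertex $u$. $\mathbf{FinArb}^<_\star$: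 finite edge-ordered arborescences with homomorphisms of pointed edge-ordered graphs. $\mathbf{TArb}$: objects are finite, pointed, connected, edge-ordered graphs $G$ for which there is a finite, connected, pointed, edge-ordered arborescence $T$ on the same vertices with the same distinguished point, such that the edge relation of $G$ is the transitive closure of that of $T$ and $u\to v_1\triangleleft u\to v_2$ in $G$ iff $(v_0\rightsquigarrow v_1)\prec^s(v_0\rightsquigarrow v_2)$, where $v_0\rightsquigarrow v$ is the unique path from $v_0$ to $v$ in $T$. In such $G$, for every $u,v$ with a path $u\rightsquigarrow v$ the longest such path is unique. Morphisms of $\mathbf{TArb}$ are homomorphisms of pointed edge-ordered graphs (i)–(iii) that also preserve longest paths: $h$ maps the longest path $u\rightsquigarrow v$ to the longest path $h(u)\rightsquigarrow h(v)$. $\Gamma(T)$: same vertices and distinguished point as $T$, edge relation the transitive closure of that of $T$, and $u\to v_1\triangleleft u\to v_2$ iff $(v_0\rightsquigarrow v_1)\prec^s(v_0\rightsquigarrow v_2)$ in $T$; $\Gamma(h)(v)=h(v)$. $\mathrm{L}(G)$: same vertices and distinguished point as $G$, containing an edge $u\to v$ iff it lies on the longest path $v_0\rightsquigarrow v$ in $G$, with neighborhood order inherited from $G$; $\mathrm{L}(h)(v)=h(v)$. *)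

From mathcomp Require Import all_boot.
Set Implicit Arguments. Unset Strict Implicit. Unset Printing Implicit Defensive.

(* A finite pointed edge-ordered graph structure on a finite vertex type V:
   an edge relation, a distinguished vertex, and for each vertex u a relation
   [eord u v1 v2] meaning  u -> v1  <|  u -> v2. *)
Record pegraph (V : finType) := PEGraph {
  edge : V -> V -> Prop;
  root : V;
  eord : V -> V -> V -> Prop }.

Section Defs.
Variable V : finType.

(* x :: p is a path (sequence of vertices joined by edges); its length is size p,
   its target is last x p. *)
Fixpoint ppath (e : V -> V -> Prop) (x : V) (p : seq V) : Prop :=
  match p with
  | [::] => True
  | y :: p' => e x y /\ ppath e y p'
  end.

Definition tclos (e : V -> V -> Prop) (x y : V) : Prop :=
  exists p, p <> [::] /\ ppath e x p /\ last x p = y.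

Definition edge_ordered (G : pegraph V) : Prop :=
  forall u,
    (forall v1 v2, eord G u v1 v2 -> edge G u v1 /\ edge G u v2) /\
    (forall v, ~ eord G u v v) /\
    (forall a b c, eord G u a b -> eord G u b c -> eord G u a c) /\
    (forall v1 v2, edge G u v1 -> edge G u v2 -> v1 <> v2 ->
       eord G u v1 v2 \/ eord G u v2 v1).

Definition connected (G : pegraph V) : Prop :=
  forall v, exists p, ppath (edge G) (root G) p /\ last (root G) p = v.

Definition arborescence (G : pegraph V) : Prop :=
  forall v, exists! p, ppath (edge G) (root G) p /\ last (root G) p = v.

Definition is_FinArb (T : pegraph V) : Prop := edge_ordered T /\ arborescence T.

Fixpoint lex_from (ord : V -> V -> V -> Prop) (u : V) (s t : seq V) : Prop :=
  match s, t with
  | [::], _ :: _ => True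
  | x :: s', y :: t' => if x == y then lex_from ord x s' t' else ord u x y
  | _, _ => False
  end.

Definition shortlex (ord : V -> V -> V -> Prop) (x : V) (p q : seq V) : Prop :=
  size p < size q \/ (size p = size q /\ lex_from ord x p q).

Definition tree_path (T : pegraph V) (v : V) (p : seq V) : Prop :=
  ppath (edge T) (root T) p /\ last (root T) p = v.

Definition tree_shortlex (T : pegraph V) (v1 v2 : V) : Prop :=
  exists p1 p2, tree_path T v1 p1 /\ tree_path T v2 p2 /\
                shortlex (eord T) (root T) p1 p2.

Definition Gamma (T : pegraph V) : pegraph V :=
  PEGraph (tclos (edge T)) (root T)
    (fun u v1 v2 => tclos (edge T) u v1 /\ tclos (edge T) u v2 /\
                    tree_shortlex T v1 v2).

Definition is_TArb (G : pegraph V) : Prop :=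
  edge_ordered G /\ connected G /\
  exists T : pegraph V,
    is_FinArb T /\ root T = root G /\
    (forall u v, edge G u v <-> tclos (edge T) u v) /\
    (forall u v1 v2, edge G u v1 -> edge G u v2 ->
       (eord G u v1 v2 <-> tree_shortlex T v1 v2)).

Definition is_longest (G : pegraph V) (u v : V) (p : seq V) : Prop :=
  ppath (edge G) u p /\ last u p = v /\
  forall q, ppath (edge G) u q -> last u q = v -> size q <= size p.

Definition Ledge (G : pegraph V) (u v : V) : Prop :=
  exists p, is_longest G (root G) v p /\ infix [:: u; v] (root G :: p).

Definition Lgraph (G : pegraph V) : pegraph V :=
  PEGraph (Ledge G) (root G)
    (fun u v1 v2 => Ledge G u v1 /\ Ledge G u v2 /\ eord G u v1 v2).

End Defs.

Definition pe_hom (V W : finType) (G : pegraph V) (H : pegraph W)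
  (h : V -> W) : Prop :=
  (forall u v, edge G u v -> edge H (h u) (h v)) /\
  (forall v, h v = root H <-> v = root G) /\
  (forall u v1 v2, eord G u v1 v2 -> eord H (h u) (h v1) (h v2)).

Definition FinArb_hom (V W : finType) (G : pegraph V) (H : pegraph W)
  (h : V -> W) : Prop := pe_hom G H h.

Definition TArb_hom (V W : finType) (G : pegraph V) (H : pegraph W)
  (h : V -> W) : Prop :=
  pe_hom G H h /\
  (forall u v p, is_longest G u v p -> is_longest H (h u) (h v) (map h p)).

Definition Gamma_mor (V W : finType) (h : V -> W) : V -> W := h.
Definition L_mor (V W : finType) (h : V -> W) : V -> W := h.

From mathcomp Require Import all_boot zify.
Set Implicit Arguments. Unset Strict Implicit. Unset Printing Implicit Defensive.

(* Gamma and L are mutually inverse on objects, up to extensional equality of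
   the edge and order relations ([pe_equiv]).  In the transitive closure of a
   tree T every path expands to a tree path with the same ends, so the longest
   paths of Gamma T are the tree paths and the edges of L (Gamma T) are those
   of T; the shortlex order of two children of u is the order of T at u.
   Dually, a TArb object G is Gamma of a witness tree, which L G recovers.
   Both functors are the identity on vertex maps, so the transposition of
   morphisms is the identity: f : Gamma T -> G gives L f : T = L (Gamma T) -> L G,
   and g : T -> L G gives Gamma g : Gamma T -> Gamma (L G) = G. *)

Section Paths.
Variable V : finType.
Implicit Types (e : V -> V -> Prop) (x y u v : V) (p q s : seq V).

Lemma ppath_cat e x p q :
  ppath e x (p ++ q) <-> ppath e x p /\ ppath e (last x p) q.
Proof. by elim: p x => [|y p IH] x /=; [tauto | move: (IH y); tauto]. Qed.

Lemma ppath_rcons e x p y :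
  ppath e x (rcons p y) <-> ppath e x p /\ e (last x p) y.
Proof. by rewrite -cats1 ppath_cat /=; tauto. Qed.

Lemma sub_ppath e e' x p :
  (forall a b, e a b -> e' a b) -> ppath e x p -> ppath e' x p.
Proof. by move=> ee'; elim: p x => [|y p IH] x //= [/ee' exy /IH]. Qed.

Lemma ppath_infix e x p a b : ppath e x p -> infix [:: a; b] (x :: p) -> e a b.
Proof.
move=> pp /infixP [s1 [s2 xp]]; elim: s1 x p pp xp => [|y s1 IH] x p pp /=.
  by case=> <- pe; rewrite pe in pp; case: pp.
case: p pp => [_ [_]|z p [_ pp] [_]]; first by case: s1 {IH}.
exact: IH pp.
Qed.

Lemma infix_last_rcons x p y : infix [:: last x p; y] (rcons (x :: p) y).
Proof. by rewrite (lastI x p) -!cats1 -catA; apply: suffix_infix. Qed.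

Lemma tclos1 e x y : e x y -> tclos e x y.
Proof. by exists [:: y]. Qed.

Lemma tclos_ppath_expand e u p : ppath (tclos e) u p ->
  exists p', [/\ ppath e u p', last u p' = last u p, size p <= size p'
               & size p' <= size p -> p' = p].
Proof.
elim: p u => [|y p IH] u /=; first by exists [::].
case=> -[r [r0 [pr lr]]] /IH [p' [pp' lp' le_pp' eq_pp']].
exists (r ++ p'); split; first by apply/ppath_cat; rewrite lr.
- by rewrite last_cat lr.
- by case: r r0 {pr lr} => // z r _; rewrite size_cat /=; lia.
case: r r0 pr lr => // z [|w r] _ /= pr <-; last by rewrite size_cat /=; lia.
by rewrite ltnS => /eq_pp' ->.
Qed.

End Paths.

Lemma map_ppath (V W : finType) (e : V -> V -> Prop) (e' : W -> W -> Prop)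
  (f : V -> W) x p :
  (forall a b, e a b -> e' (f a) (f b)) -> ppath e x p -> ppath e' (f x) (map f p).
Proof. by move=> ef; elim: p x => [|y p IH] x //= [/ef exy /IH]. Qed.

Lemma map_tclos (V W : finType) (e : V -> V -> Prop) (e' : W -> W -> Prop)
  (f : V -> W) x y :
  (forall a b, e a b -> e' (f a) (f b)) -> tclos e x y -> tclos e' (f x) (f y).
Proof.
move=> ef [p [p0 [pp <-]]]; exists (map f p).
split; first by case: p p0 {pp}.
by rewrite last_map; split=> //; apply: map_ppath pp.
Qed.

Lemma map_infix (V W : eqType) (f : V -> W) (s t : seq V) :
  infix s t -> infix (map f s) (map f t).
Proof.
by move=> /infixP [a [b ->]]; apply/infixP; exists (map f a), (map f b); rewrite !map_cat.
Qed.

Section Arborescence.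
Variables (V : finType) (T : pegraph V).
Hypothesis arbT : arborescence T.
Implicit Types (u v : V) (p q s : seq V).

Lemma tree_ppath_uniq_root p q :
  ppath (edge T) (root T) p -> ppath (edge T) (root T) q ->
  last (root T) p = last (root T) q -> p = q.
Proof.
move=> pp pq lpq; have [s [_ uniq_s]] := arbT (last (root T) p).
by rewrite -(uniq_s p) // (uniq_s q).
Qed.

Lemma tree_ppath_uniq u p q :
  ppath (edge T) u p -> ppath (edge T) u q -> last u p = last u q -> p = q.
Proof.
move=> pp pq lpq; have [s [[ps ls] _]] := arbT u.
have : s ++ p = s ++ q.
  by apply: tree_ppath_uniq_root; rewrite ?ppath_cat ?last_cat ls.
by move/eqP; rewrite eqseq_cat // eqxx => /eqP.
Qed.

Lemma tree_path_uniq v p q : tree_path T v p -> tree_path T v q -> p = q.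
Proof. by case=> pp <- [pq lq]; apply: tree_ppath_uniq_root. Qed.

Lemma tree_path_rcons u v s : tree_path T u s -> edge T u v -> tree_path T v (rcons s v).
Proof. by case=> ps ls euv; rewrite /tree_path ppath_rcons last_rcons ls. Qed.

Lemma tree_path_exists v : exists s, tree_path T v s.
Proof. by have [s [ts _]] := arbT v; exists s. Qed.

Lemma is_longest_tclos (G : pegraph V) :
  (forall x y, edge G x y <-> tclos (edge T) x y) ->
  forall u v p, is_longest G u v p <-> ppath (edge T) u p /\ last u p = v.
Proof.
move=> edgeG u v p; have Te x y : edge T x y -> edge G x y by move/tclos1/edgeG.
have GT x y : edge G x y -> tclos (edge T) x y by move/edgeG.
split.
  case=> /(sub_ppath GT)/tclos_ppath_expand [p' [pp' lp' _ eq_p'p]] [<- max_p].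
  by rewrite -{1}eq_p'p ?lp' //; apply: max_p; [apply: sub_ppath pp' | rewrite lp'].
case=> pp lp; split; first exact: sub_ppath pp.
split=> // q /(sub_ppath GT)/tclos_ppath_expand [q' [pq' lq' le_qq' _]] lq.
by rewrite (@tree_ppath_uniq u p q') // lq' lp lq.
Qed.

Lemma is_longest_Gamma u v p :
  is_longest (Gamma T) u v p <-> ppath (edge T) u p /\ last u p = v.
Proof. exact: is_longest_tclos. Qed.

End Arborescence.

Section Lexicographic.
Variables (V : finType) (ord : V -> V -> V -> Prop).
Implicit Types (x a b : V) (p q s : seq V).

Lemma lex_from_irr x p : ~ lex_from ord x p p.
Proof. by elim: p x => [|y p IH] x //=; rewrite eqxx. Qed.

Lemma lex_from_trans x p q s :
  (forall u a b c, ord u a b -> ord u b c -> ord u a c) -> (forall u a, ~ ord u a a) ->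
  lex_from ord x p q -> lex_from ord x q s -> lex_from ord x p s.
Proof.
move=> ord_trans ord_irr; elim: p x q s => [|a p IH] x [|b q] [|c s] //=.
case: (eqVneq a b) => [ab|ab]; case: (eqVneq a c) => [ac|ac]; subst.
- by rewrite eqxx; apply: IH.
- by rewrite (negbTE ac).
- by rewrite eq_sym (negbTE ab) => xab /(ord_trans _ _ _ _ xab) /ord_irr.
- by case: (eqVneq b c) => [<- //|_]; apply: ord_trans.
Qed.

Lemma lex_from_total (e : V -> V -> Prop) x p q :
  (forall u a b, e u a -> e u b -> a <> b -> ord u a b \/ ord u b a) ->
  ppath e x p -> ppath e x q -> size p = size q -> p <> q ->
  lex_from ord x p q \/ lex_from ord x q p.
Proof.
move=> ord_total; elim: p x q => [|a p IH] x [|b q] //= [xa pp] [xb pq] [spq] pq_ne.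
case: (eqVneq a b) => [ab|/eqP ab]; last exact: ord_total.
by subst b; apply: IH => // epq; apply: pq_ne; rewrite epq.
Qed.

Lemma lex_from_rcons x p a b :
  a <> b -> lex_from ord x (rcons p a) (rcons p b) <-> ord (last x p) a b.
Proof.
move=> /eqP/negbTE ab; elim: p x => [|y p IH] x /=; last by rewrite eqxx.
by rewrite ab.
Qed.

End Lexicographic.

Lemma lex_from_map (V W : finType) (ord : V -> V -> V -> Prop)
  (ord' : W -> W -> W -> Prop) (f : V -> W) x p q :
  (forall u a b, ord u a b -> ord' (f u) (f a) (f b)) -> (forall u a, ~ ord' u a a) ->
  lex_from ord x p q -> lex_from ord' (f x) (map f p) (map f q).
Proof.
move=> ord_f ord'_irr; elim: p x q => [|a p IH] x [|b q] //=.
case: (eqVneq a b) => [<-|ab]; first by rewrite eqxx; apply: IH.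
move=> /ord_f fab; case: eqP => [eab|//].
by case: (ord'_irr (f x) (f a)); rewrite {2}eab.
Qed.

Section EdgeOrdered.
Variables (V : finType) (G : pegraph V).
Hypothesis ordG : edge_ordered G.

Lemma eord_edge u a b : eord G u a b -> edge G u a /\ edge G u b.
Proof. by have [H _] := ordG u; apply: H. Qed.

Lemma eord_irr u a : ~ eord G u a a.
Proof. by have [_ [H _]] := ordG u; apply: H. Qed.

Lemma eord_trans u a b c : eord G u a b -> eord G u b c -> eord G u a c.
Proof. by have [_ [_ [H _]]] := ordG u; apply: H. Qed.

Lemma eord_total u a b :
  edge G u a -> edge G u b -> a <> b -> eord G u a b \/ eord G u b a.
Proof. by have [_ [_ [_ H]]] := ordG u; apply: H. Qed.

End EdgeOrdered.

Lemma map_tree_path (V W : finType) (T : pegraph V) (T' : pegraph W) h v p :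
  pe_hom T T' h -> tree_path T v p -> tree_path T' (h v) (map h p).
Proof.
case=> hE [hR _] [pp lp]; have hroot : h (root T) = root T' by apply/hR.
by split; rewrite -hroot; [apply: map_ppath pp | rewrite last_map lp].
Qed.

Section TreeShortlex.
Variables (V : finType) (T : pegraph V).
Hypotheses (ordT : edge_ordered T) (arbT : arborescence T).

Lemma tree_shortlex_irr v : ~ tree_shortlex T v v.
Proof.
case=> p [q [tp [tq]]]; rewrite (tree_path_uniq arbT tp tq).
by case=> [|[_]]; [rewrite ltnn | apply: lex_from_irr].
Qed.

Lemma tree_shortlex_trans a b c :
  tree_shortlex T a b -> tree_shortlex T b c -> tree_shortlex T a c.
Proof.
case=> pa [pb [ta [tb slab]]] [pb' [pc [tb' [tc slbc]]]].
rewrite (tree_path_uniq arbT tb' tb) in slbc.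
exists pa, pc; do 2 split=> //; move: slab slbc.
case=> [ab|[ab lab]] [bc|[bc lbc]].
- by left; apply: ltn_trans bc.
- by left; rewrite -bc.
- by left; rewrite ab.
- right; split; first by rewrite ab.
  by apply: lex_from_trans lab lbc; [apply: eord_trans | apply: eord_irr].
Qed.

Lemma tree_shortlex_total a b : a <> b -> tree_shortlex T a b \/ tree_shortlex T b a.
Proof.
move=> ab; have [pa ta] := tree_path_exists arbT a; have [pb tb] := tree_path_exists arbT b.
case: (ltngtP (size pa) (size pb)) => sab.
- by left; exists pa, pb; do 2 split=> //; left.
- by right; exists pb, pa; do 2 split=> //; left.
have pab : pa <> pb by move=> epab; apply: ab; rewrite -ta.2 -tb.2 epab.
have [lab|lba] := lex_from_total (eord_total ordT) ta.1 tb.1 sab pab.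
- by left; exists pa, pb; do 2 split=> //; right.
- by right; exists pb, pa; do 2 split=> //; right.
Qed.

(* Two children of [u] have tree paths differing only in their last vertex. *)
Lemma tree_shortlex_siblings u a b : edge T u a -> edge T u b ->
  tree_shortlex T a b <-> eord T u a b.
Proof.
move=> ua ub; have [s ts] := tree_path_exists arbT u.
have ta := tree_path_rcons ts ua; have tb := tree_path_rcons ts ub.
split.
  case=> pa [pb [/(tree_path_uniq arbT ta) <- [/(tree_path_uniq arbT tb) <-]]].
  case=> [|[_]]; first by rewrite !size_rcons ltnn.
  have [-> /lex_from_irr //|ab] := eqVneq a b.
  by rewrite lex_from_rcons ?ts.2 //; apply/eqP.
move=> uab; exists (rcons s a), (rcons s b); do 2 split=> //; right.
split; first by rewrite !size_rcons.
rewrite lex_from_rcons ?ts.2 // => eab.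
by move: uab; rewrite eab => /(eord_irr ordT).
Qed.

End TreeShortlex.

Lemma tree_shortlex_map (V W : finType) (T : pegraph V) (T' : pegraph W) h v1 v2 :
  pe_hom T T' h -> (forall u a, ~ eord T' u a a) ->
  tree_shortlex T v1 v2 -> tree_shortlex T' (h v1) (h v2).
Proof.
move=> hom irrT' [p1 [p2 [t1 [t2 sl]]]].
exists (map h p1), (map h p2); split; first exact: map_tree_path hom t1.
split; first exact: map_tree_path hom t2.
have <- : h (root T) = root T' by apply/hom.2.1.
rewrite /shortlex !size_map; case: sl => [|[s12 l12]]; [by left | right; split=> //].
by apply: lex_from_map l12 => //; apply: hom.2.2.
Qed.

Section Equivalence.
Variable V : finType.
Implicit Types G H : pegraph V.

Definition pe_equiv G H : Prop :=
  [/\ root G = root H, forall u v, edge G u v <-> edge H u v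
    & forall u a b, eord G u a b <-> eord H u a b].

Lemma pe_equiv_refl G : pe_equiv G G.
Proof. by []. Qed.

Lemma pe_equiv_sym G H : pe_equiv G H -> pe_equiv H G.
Proof. by case=> rGH eGH oGH; split=> // *; [rewrite eGH | rewrite oGH]. Qed.

Lemma eq_ppath (e e' : V -> V -> Prop) x p :
  (forall a b, e a b <-> e' a b) -> ppath e x p <-> ppath e' x p.
Proof. by move=> ee'; split; apply: sub_ppath => a b /ee'. Qed.

Lemma eq_is_longest G H u v p : (forall a b, edge G a b <-> edge H a b) ->
  is_longest G u v p -> is_longest H u v p.
Proof.
move=> eGH [pp [lp max_p]]; split; first by apply/(eq_ppath _ _ eGH).
by split=> // q /(eq_ppath _ _ eGH); apply: max_p.
Qed.

Lemma is_FinArb_equiv G H : pe_equiv G H -> is_FinArb G -> is_FinArb H.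
Proof.
case=> rGH eGH oGH [ordG arbG]; split.
  move=> u; split; [|split; [|split]].
  - by move=> a b /oGH /(eord_edge ordG) [/eGH ? /eGH ?].
  - by move=> a /oGH /(eord_irr ordG).
  - by move=> a b c /oGH ab /oGH bc; apply/oGH; apply: eord_trans ab bc.
  - by move=> a b /eGH ua /eGH ub /(eord_total ordG ua ub) [] /oGH; [left | right].
move=> v; have [p [[pp lp] uniq_p]] := arbG v; rewrite -rGH.
exists p; split; first by split=> //; apply/(eq_ppath _ _ eGH).
by move=> q [/(eq_ppath _ _ eGH) pq lq]; apply: uniq_p.
Qed.

End Equivalence.

Lemma pe_hom_equiv (V W : finType) (G G' : pegraph V) (H H' : pegraph W) h :
  pe_equiv G G' -> pe_equiv H H' -> pe_hom G H h -> pe_hom G' H' h.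
Proof.
case=> rG eG oG [rH eH oH] [hE [hR hO]]; split; [|split].
- by move=> u v /eG /hE /eH.
- by move=> v; rewrite -rG -rH.
- by move=> u a b /oG /hO /oH.
Qed.

Lemma TArb_hom_equiv (V W : finType) (G G' : pegraph V) (H H' : pegraph W) h :
  pe_equiv G G' -> pe_equiv H H' -> TArb_hom G H h -> TArb_hom G' H' h.
Proof.
move=> GG' HH' [hom hL]; split; first exact: pe_hom_equiv hom.
have [_ eG _] := pe_equiv_sym GG'; have [_ eH _] := HH'.
by move=> u v p /(eq_is_longest eG) /hL /(eq_is_longest eH).
Qed.

Definition tarb_witness (V : finType) (G T : pegraph V) : Prop :=
  is_FinArb T /\ root T = root G /\
  (forall u v, edge G u v <-> tclos (edge T) u v) /\
  (forall u v1 v2, edge G u v1 -> edge G u v2 ->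
     (eord G u v1 v2 <-> tree_shortlex T v1 v2)).

Section Gamma.
Variables (V : finType) (T : pegraph V).
Hypothesis FT : is_FinArb T.

Lemma Gamma_witness : tarb_witness (Gamma T) T.
Proof. by do 3 split=> //; move=> u v1 v2 /= ? ?; tauto. Qed.

Lemma is_TArb_Gamma : is_TArb (Gamma T).
Proof.
have [ordT arbT] := FT; split; last split; last by exists T; apply: Gamma_witness.
  move=> u; split; [by move=> a b [ua [ub _]] | split; [|split]].
  - by move=> v [_ [_ /(tree_shortlex_irr arbT)]].
  - move=> a b c [ua [_ ab]] [_ [uc bc]]; do 2 split=> //.
    exact: tree_shortlex_trans ordT arbT _ _ _ ab bc.
  - by move=> a b ua ub /(tree_shortlex_total ordT arbT) []; [left | right].
move=> v; have [p [pp lp]] := tree_path_exists arbT v.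
by exists p; split=> //; apply: sub_ppath pp => a b /tclos1.
Qed.

End Gamma.

Lemma TArb_hom_Gamma (V W : finType) (T : pegraph V) (T' : pegraph W) h :
  is_FinArb T -> is_FinArb T' -> pe_hom T T' h -> TArb_hom (Gamma T) (Gamma T') h.
Proof.
move=> [_ arbT] [ordT' arbT'] hom; have [hE [hR _]] := hom.
split.
  split=> [u v|]; first exact: map_tclos hE.
  split=> // u a b [ua [ub ab]]; split; first exact: map_tclos hE ua.
  split; first exact: map_tclos hE ub.
  exact: tree_shortlex_map hom (eord_irr ordT') ab.
move=> u v p /(is_longest_Gamma arbT) [pp lp]; apply/(is_longest_Gamma arbT').
by split; [apply: map_ppath pp | rewrite last_map lp].
Qed.

Section Witness.
Variables (V : finType) (G T : pegraph V).
Hypothesis wGT : tarb_witness G T.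

Let ordT : edge_ordered T := wGT.1.1.
Let arbT : arborescence T := wGT.1.2.
Let rootT : root T = root G := wGT.2.1.
Let edgeG : forall u v, edge G u v <-> tclos (edge T) u v := wGT.2.2.1.
Let eordG : forall u v1 v2, edge G u v1 -> edge G u v2 ->
  (eord G u v1 v2 <-> tree_shortlex T v1 v2) := wGT.2.2.2.

(* A tree edge [u -> v] is the last edge of the tree path to [v], which is the
   longest path to [v] in [G]. *)
Lemma Ledge_tree_edge u v : Ledge G u v <-> edge T u v.
Proof.
split=> [[p [/(is_longest_tclos arbT edgeG) [pp _] uv]]|uv].
  by apply: ppath_infix pp uv; rewrite rootT.
have [s ts] := tree_path_exists arbT u; have [ps lv] := tree_path_rcons ts uv.
exists (rcons s v); rewrite -rootT; split; first exact/(is_longest_tclos arbT edgeG).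
by rewrite -rcons_cons -{1}ts.2; apply: infix_last_rcons.
Qed.

Lemma Lgraph_equiv : pe_equiv (Lgraph G) T.
Proof.
split=> [|u v|u a b]; [by rewrite rootT | exact: Ledge_tree_edge |].
have Gtree x y : edge T x y -> edge G x y by move/tclos1/edgeG.
split=> [[/Ledge_tree_edge ua [/Ledge_tree_edge ub]]|uab].
  by move/(eordG (Gtree _ _ ua) (Gtree _ _ ub))/(tree_shortlex_siblings ordT arbT ua ub).
have [ua ub] := eord_edge ordT uab; rewrite /= !Ledge_tree_edge; do 2 split=> //.
by apply/(eordG (Gtree _ _ ua) (Gtree _ _ ub))/(tree_shortlex_siblings ordT arbT ua ub).
Qed.

Lemma Gamma_equiv : edge_ordered G -> pe_equiv (Gamma T) G.
Proof.
move=> ordG; split=> [//|u v|u a b]; first by rewrite edgeG.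
split=> [[/edgeG ua [/edgeG ub ab]]|uab]; first exact/(eordG ua ub).
have [ua ub] := eord_edge ordG uab.
by split; [apply/edgeG | split; [apply/edgeG | apply/(eordG ua ub)]].
Qed.

End Witness.

Lemma is_FinArb_Lgraph (V : finType) (G : pegraph V) : is_TArb G -> is_FinArb (Lgraph G).
Proof.
case=> _ [_ [T wGT]]; apply: is_FinArb_equiv wGT.1.
exact/pe_equiv_sym/Lgraph_equiv.
Qed.

Lemma Ledge_hom (V W : finType) (G : pegraph V) (H : pegraph W) h u v :
  TArb_hom G H h -> Ledge G u v -> Ledge H (h u) (h v).
Proof.
case=> -[_ [hR _]] hL [p [lp uv]]; have hroot : h (root G) = root H by apply/hR.
by exists (map h p); rewrite -hroot; split; [apply: hL | apply: (map_infix h uv)].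
Qed.

Lemma FinArb_hom_Lgraph (V W : finType) (G : pegraph V) (H : pegraph W) h :
  TArb_hom G H h -> FinArb_hom (Lgraph G) (Lgraph H) h.
Proof.
move=> hom; have [[_ [hR hO]] _] := hom.
split=> [u v|]; first exact: Ledge_hom.
split=> // u a b [ua [ub uab]].
by split; [apply: Ledge_hom ua | split; [apply: Ledge_hom ub | apply: hO]].
Qed.

Lemma FinArb_hom_transpose (V W : finType) (T : pegraph V) (G : pegraph W) f :
  is_FinArb T -> TArb_hom (Gamma T) G f -> FinArb_hom T (Lgraph G) f.
Proof.
move=> FT /FinArb_hom_Lgraph; apply: pe_hom_equiv (pe_equiv_refl _).
exact/Lgraph_equiv/Gamma_witness.
Qed.

Lemma TArb_hom_transpose (V W : finType) (T : pegraph V) (G : pegraph W) g :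
  is_FinArb T -> is_TArb G -> FinArb_hom T (Lgraph G) g -> TArb_hom (Gamma T) G g.
Proof.
move=> FT [ordG [_ [TG wGTG]]] /(pe_hom_equiv (pe_equiv_refl T) (Lgraph_equiv wGTG)) hom.
exact: TArb_hom_equiv (pe_equiv_refl _) (Gamma_equiv wGTG ordG) (TArb_hom_Gamma FT wGTG.1 hom).
Qed.

Theorem theorem8p6 :
  (* Gamma : FinArb^<_* -> TArb is a functor *)
  (forall (V : finType) (T : pegraph V), is_FinArb T -> is_TArb (Gamma T)) /\
  (forall (V W : finType) (T : pegraph V) (T' : pegraph W) (h : V -> W),
     is_FinArb T -> is_FinArb T' -> FinArb_hom T T' h ->
     TArb_hom (Gamma T) (Gamma T') (Gamma_mor h)) /\
  (* L : TArb -> FinArb^<_* is a functor *)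
  (forall (V : finType) (G : pegraph V), is_TArb G -> is_FinArb (Lgraph G)) /\
  (forall (V W : finType) (G : pegraph V) (G' : pegraph W) (h : V -> W),
     is_TArb G -> is_TArb G' -> TArb_hom G G' h ->
     FinArb_hom (Lgraph G) (Lgraph G') (L_mor h)) /\
  (* Gamma -| L : natural bijection TArb(Gamma T, G) ~ FinArb(T, L G) *)
  exists (phi psi : forall (V W : finType), pegraph V -> pegraph W ->
                      (V -> W) -> (V -> W)),
    (forall (V W : finType) (T : pegraph V) (G : pegraph W),
       is_FinArb T -> is_TArb G ->
       (forall f, TArb_hom (Gamma T) G f -> FinArb_hom T (Lgraph G) (phi V W T G f)) /\
       (forall g, FinArb_hom T (Lgraph G) g -> TArb_hom (Gamma T) G (psi V W T G g)) /\
       (forall f, TArb_hom (Gamma T) G f -> psi V W T G (phi V W T G f) =1 f) /\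
       (forall g, FinArb_hom T (Lgraph G) g -> phi V W T G (psi V W T G g) =1 g)) /\
    (forall (V V' W W' : finType) (T : pegraph V) (T' : pegraph V')
            (G : pegraph W) (G' : pegraph W')
            (a : V' -> V) (b : W -> W') (f : V -> W),
       is_FinArb T -> is_FinArb T' -> is_TArb G -> is_TArb G' ->
       FinArb_hom T' T a -> TArb_hom G G' b -> TArb_hom (Gamma T) G f ->
       phi V' W' T' G' (b \o f \o Gamma_mor a)
         =1 L_mor b \o phi V W T G f \o a).
Proof.
split; first exact: is_TArb_Gamma.
split; first exact: TArb_hom_Gamma.
split; first exact: is_FinArb_Lgraph.
split; first by move=> V W G G' h _ _; apply: FinArb_hom_Lgraph.
exists (fun _ _ _ _ f => f), (fun _ _ _ _ g => g); split=> // V W T G FT TG.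
split; first by move=> f; apply: FinArb_hom_transpose.
by split=> // g; apply: TArb_hom_transpose.
Qed.
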